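(* Let $L$ be an oriented graphical virtual link, let $D$ be a graphical (i.e. checkerboard colorable) diagram of $L$, and let $G_D$ be a signed Tait graph of $D$. Then $$V_L(t)=(-t^{-\frac{3}{4}})^{-w(D)}\,F[G_D]\big(t^{-\frac14},\,t^{\frac14},\,-t^{-\frac12}-t^{\frac12}\big).$$
   Context: Virtual links are equivalence classes of virtual link diagrams (plane curves with real and virtual crossings) under generalized Reidemeister moves. A virtual link is graphical if it is represented by a diagram obtained from a signed cyclic graph (graph with cyclic order of half-edges at each vertex and edge signs) by the medial construction; equivalently (by a result of the paper) it has a checkerboard colorable diagram. A diagram is checkerboard colorable if one can color a small neighbourhood of one side of each arc so that near each real crossing the colored sides alternate and near virtual crossings the colorings of the two strands pass through independently. Bracket polynomial: $\langle D\rangle(A,B,d)=\sum_{\sigma}A^{\alpha(\sigma)}B^{\beta(\sigma)}d^{|\sigma|-1}$ over all states $\sigma$ (choice of $A$- or $B$-smoothing at each real crossing), $\alpha,\beta$ the numbers of $A$-, $B$-smoothings, $|\sigma|$ the number of closed curves. The writhe $w(D)$ is the sum of the oriented signs $\pm1$ of the real crossings. The Jones polynomial is $V_L(t)=f(t^{-1/4})$ where $f(A)=(-A^3)^{-w(D)}\langle D\rangle(A,A^{-1},-A^2-A^{-2})$. Signed Tait graph (Chmutov–Pak): given a checkerboard coloring of $D$, thicken $D$ to a surface in which bands at virtual crossings pass without touching; the colored neighbourhoods form annuli whose exterior circles run along the diagram, jumping between strands at real crossings so that the two colored corners of each crossing lie on them. Replace each real crossing by an edge-ribbon joining the exterior-circle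 arcs at the colored corners and glue discs along the interior circles; this gives an orientable signed ribbon graph, i.e. a signed cyclic graph $G_D$ (vertices = capped annuli, edges = real crossings, sign $+$ iff the $A$-smoothing joins the two colored corners). The polynomial $F[G]$ of a signed cyclic graph: edges may be ''marked''; for an unmarked edge $e$, $G-e$ deletes $e$, $G(\bar e)$ keeps and marks $e$; $F[G]=B\,F[G-e]+A\,F[G(\bar e)]$ for positive $e$, $F[G]=A\,F[G-e]+B\,F[G(\bar e)]$ for negative $e$; for a spanning subgraph $H$ with all edges marked, $F[H]=d^{bc(H)-1}$, $bc(H)$ the number of boundary components of the ribbon graph of $H$. *)

From mathcomp Require Import all_boot all_order all_algebra.
Set Implicit Arguments. Unset Strict Implicit. Unset Printing Implicit Defensive.
Import Order.TTheory GRing.Theory Num.Theory.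

Definition o4 (k : nat) : 'I_4 := @inord 3 (k %% 4).

(* Virtual link diagrams, up to detour moves (virtual crossings are
   invisible in this combinatorial data).
   - vd_n real crossings; each crossing c has four ports (c,0),(c,1),(c,2),(c,3)
     listed in counterclockwise order around c;  ports 0,2 form the OVER
     strand, ports 1,3 the UNDER strand;
   - vd_match p = the port at the other end of the arc leaving port p;
   - vd_loops = number of closed components without real crossings;
   - orientation: vd_o02 c = over strand runs from port 0 to port 2,
                  vd_o13 c = under strand runs from port 1 to port 3.      *)
Record vdiagram := VDiagram {
  vd_n : nat;
  vd_loops : nat;
  vd_match : 'I_vd_n * 'I_4 -> 'I_vd_n * 'I_4;
  vd_o02 : 'I_vd_n -> bool;
  vd_o13 : 'I_vd_n -> bool }.

Definition port (D : vdiagram) := ('I_(vd_n D) * 'I_4)%type.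

Definition is_exit (D : vdiagram) (p : port D) : bool :=
  if ~~ odd p.2 then (val p.2 == 2) == @vd_o02 D p.1
  else (val p.2 == 3) == @vd_o13 D p.1.

Definition vd_wf (D : vdiagram) : Prop :=
  [/\ forall p : port D, @vd_match D (@vd_match D p) = p,
      forall p : port D, @vd_match D p != p,
      forall p : port D, is_exit (@vd_match D p) = ~~ is_exit p
    & 0 < vd_n D + vd_loops D].

(* oriented sign of a crossing (+1 iff the under strand crosses the over
   strand from right to left) and writhe *)
Definition csign (D : vdiagram) (c : 'I_(vd_n D)) : int :=
  if @vd_o02 D c == @vd_o13 D c then 1%R else (-1)%R.
Definition writhe (D : vdiagram) : int := (\sum_(c : 'I_(vd_n D)) csign c)%R.

(* states: s c = true means A-smoothing at c.  The A-regions of a crossing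
   (swept by rotating the over strand counterclockwise) are the corners
   (0,1) and (2,3); the A-smoothing joins them, i.e. reconnects ports
   1-2 and 3-0; the B-smoothing reconnects ports 0-1 and 2-3. *)
Definition smooth (D : vdiagram) (s : {ffun 'I_(vd_n D) -> bool}) (p : port D)
  : port D :=
  let i := val p.2 in
  if s p.1 then (p.1, if odd i then o4 i.+1 else o4 (i + 3))
  else (p.1, if odd i then o4 (i + 3) else o4 i.+1).

Definition state_rel (D : vdiagram) (s : {ffun 'I_(vd_n D) -> bool})
  : rel (port D) := fun p q =>
  [|| q == @vd_match D p, p == @vd_match D q, q == smooth s p | p == smooth s q].

Definition ncurves (D : vdiagram) (s : {ffun 'I_(vd_n D) -> bool}) : nat :=
  n_comp (state_rel s) predT + vd_loops D.

Local Open Scope ring_scope.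

Definition bracket (R : comNzRingType) (D : vdiagram) (A B d : R) : R :=
  \sum_(s : {ffun 'I_(vd_n D) -> bool})
     A ^+ #|[set c | s c]| * B ^+ #|[set c | ~~ s c]| * d ^+ (ncurves s).-1.

(* Jones polynomial V(t) evaluated at t^{1/4} = x, i.e. f(A) at A = x^{-1}:
   V = (-A^3)^{-w(D)} <D>(A, A^{-1}, -A^2 - A^{-2}). *)
Definition jones (R : fieldType) (D : vdiagram) (x : R) : R :=
  let A := x^-1 in
  (- A ^+ 3) ^ (- writhe D) * bracket D A A^-1 (- A ^+ 2 - A ^- 2).

(* Signed cyclic graphs, as combinatorial maps: each edge e has two
   half-edges (e,false),(e,true); sc_rot is the cyclic order of half-edges
   around vertices (the non-isolated vertices are the sc_rot-orbits);
   sc_iso counts the isolated vertices; sc_sign e = true iff e positive. *)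
Record scgraph := SCGraph {
  sc_E : finType;
  sc_rot : sc_E * bool -> sc_E * bool;
  sc_iso : nat;
  sc_sign : sc_E -> bool }.

Definition flipd (E : Type) (h : E * bool) : E * bool := (h.1, ~~ h.2).

(* Boundary walk of the ribbon graph of the spanning subgraph with edge set
   S: from a half-edge of S go across its edge and rotate; half-edges of
   deleted edges are skipped by rotating further.  Orbits of this permutation
   = boundary components through non-isolated vertices of the subgraph, plus
   one orbit per vertex of G all of whose edges were deleted. *)
Definition face_step (G : scgraph) (S : {set sc_E G}) (h : sc_E G * bool) :=
  if h.1 \in S then @sc_rot G (flipd h) else @sc_rot G h.

Definition bc (G : scgraph) (S : {set sc_E G}) : nat :=
  fcard (face_step S) predT + sc_iso G.

(* F[G](A,B,d), the full expansion of the deletion/marking recursion: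
   positive edge: deleted -> B, kept(marked) -> A;
   negative edge: deleted -> A, kept(marked) -> B. *)
Definition Fpoly (R : comNzRingType) (G : scgraph) (A B d : R) : R :=
  \sum_(S : {set sc_E G})
     (\prod_(e : sc_E G)
        (if @sc_sign G e then (if e \in S then A else B)
         else (if e \in S then B else A)))
     * d ^+ (bc S).-1.

(* Corner i of crossing c is the corner between
   ports i and i+1.  col c = true: corners 0,2 coloured; false: corners 1,3.
   Going along the arc from port (c,i) to (c',j), its left side is corner i
   at c and corner j-1 at c'; the colouring must agree along every arc. *)
Definition colored (D : vdiagram) (col : {ffun 'I_(vd_n D) -> bool})
  (p : port D) : bool := col p.1 == ~~ odd p.2.

Definition checkerboard (D : vdiagram) (col : {ffun 'I_(vd_n D) -> bool})
  : Prop :=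
  forall p : port D,
    colored col p =
    colored col ((@vd_match D p).1, o4 (val (@vd_match D p).2 + 3)).

(* Signed Tait graph: edges = crossings; the two half-edges of crossing c
   sit at its two coloured corners; around each capped annulus the exterior
   circle goes from coloured corner i of c along the arc at port i+1 to the
   coloured corner j at c' where (c',j) = match (c,i+1); free loops give
   isolated vertices; sign + iff the A-smoothing joins the coloured corners,
   i.e. iff corners 0,2 are coloured. *)
Definition corner_of_dart (D : vdiagram) (col : {ffun 'I_(vd_n D) -> bool})
  (h : 'I_(vd_n D) * bool) : port D :=
  (h.1, o4 ((if col h.1 then 0 else 1) + 2 * h.2)).

Definition dart_of_corner (D : vdiagram) (p : port D) : 'I_(vd_n D) * bool :=
  (p.1, 2 <= val p.2)%N.

Definition tait_rot (D : vdiagram) (col : {ffun 'I_(vd_n D) -> bool})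
  (h : 'I_(vd_n D) * bool) : 'I_(vd_n D) * bool :=
  let p := corner_of_dart col h in
  dart_of_corner (@vd_match D (p.1, o4 (val p.2).+1)).

Definition tait (D : vdiagram) (col : {ffun 'I_(vd_n D) -> bool}) : scgraph :=
  @SCGraph 'I_(vd_n D) (tait_rot col) (vd_loops D) (fun c => col c).

From mathcomp Require Import all_boot all_order all_algebra.
Import GRing.Theory.
Set Implicit Arguments. Unset Strict Implicit. Unset Printing Implicit Defensive.

(* The state [s] of [D] corresponds to the spanning subgraph of the Tait graph
   whose edges are the crossings where [s] joins the two coloured corners (the
   A-smoothing at a positive crossing, the B-smoothing at a negative one); the
   bracket monomial of [s] is then exactly the F-monomial of that subgraph.
   Each curve of [s] alternates between arcs of [D] and smoothing arcs, and
   every smoothing arc has exactly one coloured end; so following a curve and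
   recording the coloured corners it meets is the boundary walk of the ribbon
   subgraph, and the curves of [s] are its boundary components. *)

Lemma o4_val (k : nat) : nat_of_ord (o4 k) = k %% 4.
Proof. by rewrite /o4 inordK // ltn_pmod. Qed.

Section Corners.

Variables (D : vdiagram) (col : {ffun 'I_(vd_n D) -> bool}).

Lemma smoothK (s : {ffun 'I_(vd_n D) -> bool}) : involutive (smooth s).
Proof.
case=> c i; rewrite /smooth /=.
by case E: (s c); case: i => [[|[|[|[|i]]]] Hi] //=; rewrite ?E ?o4_val /=;
  congr pair; apply: val_inj; rewrite /= ?o4_val.
Qed.

Lemma colored_smooth (s : {ffun 'I_(vd_n D) -> bool}) (p : port D) :
  colored col (smooth s p) = ~~ colored col p.
Proof.
case: p => c i; rewrite /smooth /colored /=.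
by case: (s c); case: (col c); case: i => [[|[|[|[|i]]]] Hi] //=; rewrite o4_val.
Qed.

Lemma colored_o4_add3 (c : 'I_(vd_n D)) (j : 'I_4) :
  colored col (c, o4 (val j + 3)) = ~~ colored col (c, j).
Proof.
rewrite /colored /= o4_val.
by case: (col c); case: j => [[|[|[|[|i]]]] Hi].
Qed.

Lemma colored_match : checkerboard col ->
  forall p : port D, colored col (@vd_match D p) = ~~ colored col p.
Proof.
by move=> hcol p; rewrite (hcol p); case: (vd_match p) => c j; rewrite colored_o4_add3 negbK.
Qed.

Lemma corner_of_dartK : cancel (corner_of_dart col) (@dart_of_corner D).
Proof.
case=> c b; rewrite /dart_of_corner /corner_of_dart /= o4_val.
by case: (col c); case: b.
Qed.

Lemma colored_corner_of_dart (h : 'I_(vd_n D) * bool) :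
  colored col (corner_of_dart col h).
Proof.
case: h => c b; rewrite /colored /corner_of_dart /= o4_val.
by case: (col c); case: b.
Qed.

Lemma dart_of_cornerK (p : port D) :
  colored col p -> corner_of_dart col (dart_of_corner p) = p.
Proof.
case: p => c i; rewrite /colored /corner_of_dart /dart_of_corner /=.
by case: (col c); case: i => [[|[|[|[|i]]]] Hi] //= _;
  congr pair; apply: val_inj; rewrite /= ?o4_val.
Qed.

Definition state_edges (s : {ffun 'I_(vd_n D) -> bool}) : {set 'I_(vd_n D)} :=
  [set c | s c == col c].

Lemma face_step_tait (s : {ffun 'I_(vd_n D) -> bool}) (h : 'I_(vd_n D) * bool) :
  @face_step (tait col) (state_edges s) h =
  dart_of_corner (@vd_match D (smooth s (corner_of_dart col h))).
Proof.
case: h => c b; rewrite /face_step /= /tait_rot /flipd inE /smooth /corner_of_dart /=.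
case E: (s c); case F: (col c); case: b => /=; rewrite ?E ?F /=;
  do 3 f_equal; apply: val_inj; rewrite /= !o4_val; by vm_compute.
Qed.

End Corners.

Section StateCurves.

Variables (D : vdiagram) (col : {ffun 'I_(vd_n D) -> bool}).
Variable s : {ffun 'I_(vd_n D) -> bool}.
Hypotheses (matchK : involutive (@vd_match D)) (hcol : checkerboard col).

Local Notation f := (@face_step (tait col) (state_edges col s)).
Local Notation e := (state_rel s).

Lemma face_step_tait_inj : injective f.
Proof.
move=> x y; rewrite !face_step_tait => /(congr1 (corner_of_dart col)).
rewrite !dart_of_cornerK ?colored_match ?colored_smooth ?colored_corner_of_dart //.
move/(congr1 (@vd_match D)); rewrite !matchK => /(congr1 (smooth s)).
by rewrite !smoothK => /(congr1 (@dart_of_corner D)); rewrite !corner_of_dartK.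
Qed.

Lemma state_rel_sym : connect_sym e.
Proof.
apply: sym_connect_sym => p q; rewrite /state_rel.
by case: (q == _); case: (p == _); case: (q == smooth s p); case: (p == smooth s q).
Qed.

Let face_sym : connect_sym (frel f) := fconnect_sym face_step_tait_inj.

Definition smoothing_dart (p : port D) : 'I_(vd_n D) * bool :=
  dart_of_corner (if colored col p then p else smooth s p).

Lemma smoothing_dart_smooth (p : port D) : smoothing_dart (smooth s p) = smoothing_dart p.
Proof. by rewrite /smoothing_dart colored_smooth smoothK; case: (colored col p). Qed.

Lemma corner_of_smoothing_dart (p : port D) :
  corner_of_dart col (smoothing_dart p) = if colored col p then p else smooth s p.
Proof.
rewrite /smoothing_dart dart_of_cornerK //.
by case cp: (colored col p); rewrite ?colored_smooth cp.
Qed.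

Lemma face_step_smoothing_dart (p : port D) : colored col p ->
  f (smoothing_dart (@vd_match D p)) = smoothing_dart p.
Proof.
move=> cp; rewrite face_step_tait corner_of_smoothing_dart.
by rewrite colored_match // cp smoothK matchK /smoothing_dart cp.
Qed.

Lemma connect_smoothing_dart_match (p : port D) :
  connect (frel f) (smoothing_dart p) (smoothing_dart (@vd_match D p)).
Proof.
case cp: (colored col p).
  by rewrite face_sym; apply: connect1; rewrite /= face_step_smoothing_dart.
apply: connect1; rewrite /= -{1}(matchK p) face_step_smoothing_dart //.
by rewrite colored_match // cp.
Qed.

Lemma tait_state_adjunction :
  rel_adjunction (corner_of_dart col) e (frel f) predT.
Proof.
apply: (intro_adjunction face_sym (_ : closed e predT) (fun p _ => smoothing_dart p)) => //.
  move=> p _; split.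
    rewrite corner_of_smoothing_dart; case: (colored col p); first exact: connect0.
    by apply: connect1; rewrite /state_rel eqxx !orbT.
  move=> q _; rewrite /state_rel => /or4P[] /eqP ->.
  - exact: connect_smoothing_dart_match.
  - by rewrite face_sym connect_smoothing_dart_match.
  - by rewrite smoothing_dart_smooth connect0.
  - by rewrite smoothing_dart_smooth connect0.
move=> h _; split.
  by rewrite /smoothing_dart colored_corner_of_dart corner_of_dartK connect0.
move=> h' /eqP <-; rewrite face_step_tait dart_of_cornerK; last first.
  by rewrite colored_match // colored_smooth colored_corner_of_dart.
apply: (@connect_trans _ e (smooth s (corner_of_dart col h))); apply: connect1.
  by rewrite /state_rel eqxx !orbT.
by rewrite /state_rel eqxx.
Qed.

Lemma ncurves_bc : ncurves s = @bc (tait col) (state_edges col s).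
Proof.
rewrite /ncurves /bc; congr (_ + _).
by rewrite (adjunction_n_comp _ state_rel_sym face_sym _ tait_state_adjunction).
Qed.

End StateCurves.

Local Open Scope ring_scope.

Lemma state_edges_bij (D : vdiagram) (col : {ffun 'I_(vd_n D) -> bool}) :
  bijective (state_edges col).
Proof.
exists (fun S : {set 'I_(vd_n D)} => [ffun c => (c \in S) == col c]).
  by move=> s; apply/ffunP => c; rewrite ffunE inE; case: (s c); case: (col c).
by move=> S; apply/setP => c; rewrite inE ffunE; case: (c \in S); case: (col c).
Qed.

Lemma bracket_monomial (R : comNzRingType) (n : nat) (s : {ffun 'I_n -> bool}) (a b : R) :
  a ^+ #|[set c | s c]| * b ^+ #|[set c | ~~ s c]| =
  \prod_(c < n) (if s c then a else b).
Proof.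
rewrite (bigID (fun c => s c)) /= -!prodr_const.
by congr (_ * _); apply: eq_big => c; rewrite ?inE //; case: (s c).
Qed.

Lemma bracket_Fpoly (D : vdiagram) (col : {ffun 'I_(vd_n D) -> bool})
  (hD : vd_wf D) (hcol : checkerboard col) (R : comNzRingType) (a b d : R) :
  bracket D a b d = @Fpoly R (tait col) a b d.
Proof.
have [matchK _ _ _] := hD.
rewrite /Fpoly /bracket (reindex (state_edges col)); last by apply: onW_bij; apply: state_edges_bij.
apply: eq_bigr => s _; rewrite -ncurves_bc // bracket_monomial; congr (_ * _).
by apply: eq_bigr => c _; rewrite inE /=; case: (s c); case: (col c).
Qed.

Theorem corollary4p5 (D : vdiagram) (col : {ffun 'I_(vd_n D) -> bool})
  (hD : vd_wf D) (hcol : checkerboard col)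
  (R : fieldType) (x : R) (hx : x != 0) :
  jones D x =
  (- x ^- 3) ^ (- writhe D) *
  @Fpoly R (tait col) x^-1 x (- x ^- 2 - x ^+ 2).
Proof. by rewrite /jones (bracket_Fpoly hD hcol) invrK !exprVn invrK. Qed.
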